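(* Let $k=1$, $\gamma>0$, $\delta>1$, and $Z=\{(\tau,s)\in\mathcal C:g(\tau,s)=0\}$. (a) If $1<\delta<\Phi$ and $\gamma>M_{\mathcal F}(\delta)/2$, then $Z\cap(\{\tau\}\times S^1)$ has exactly two points for every $\tau\in(0,1)$ and is the single point $(1,3\pi/2)$ for $\tau=1$; moreover all points of $Z\cap(\{\tau\}\times S^1)$ converge to $s=3\pi/2$ as $\tau\to0^+$ (so $Z$ closes up to a contractible closed curve with ''fold points'' at $\tau=0$ and $\tau=1$). (b) If $1<\delta<\Phi$ and $0<\gamma<M_{\mathcal F}(\delta)/2$, then there are $0<a<b<1$ such that $Z\cap(\{\tau\}\times S^1)$ has exactly two points for $\tau\in(0,a)\cup(b,1)$, is the single point $(\tau,\pi/2)$ for $\tau\in\{a,b\}$, is empty for $\tau\in(a,b)$, and is the single point $(1,3\pi/2)$ for $\tau=1$; $(a,\pi/2)$ is a subcritical and $(b,\pi/2)$ a supercritical fold point, and the points of $Z\cap(\{\tau\}\times S^1)$ converge to $s=3\pi/2$ as $\tau\to0^+$. (c) If $\delta>\Phi$, then there is $\tau_0\in(0,1)$ such that $Z\cap(\{\tau\}\times S^1)$ is empty for $\tau<\tau_0$, is the single point $(\tau_0,\pi/2)$ for $\tau=\tau_0$, has exactly two points for $\tau\in(\tau_0,1)$, and is the single point $(1,3\pi/2)$ for $\tau=1$; $(\tau_0,\pi/2)$ is a supercritical fold point and $(1,3\pi/2)$ is a fold point.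
   Context: Let $S^1=\mathbb R/2\pi\mathbb Z$ and $\mathcal C=\{(\tau,s):0<\tau\le1,\ s\in S^1\}$. Let $p(\delta)=-\delta^2+\delta+1$, $\Phi=(1+\sqrt5)/2$. For parameters $\delta>1$, $\gamma>0$, $k>0$ define $g:\mathcal C\to\mathbb R$, $g(\tau,s)=\tau^{\delta^2}+\gamma\tau^{\delta^2-\delta}(1+k\sin s)-\tau$; thus $g(\tau,s)=0$ iff $\gamma(1+k\sin s)=\mathcal F_\delta(\tau)$, where $\mathcal F_\delta(\tau)=\tau^{p(\delta)}-\tau^\delta$. For $1<\delta<\Phi$, $M_{\mathcal F}(\delta)=\max_{(0,1]}\mathcal F_\delta>0$. A fold point is a point $(\tau_0,s_0)\in\mathcal C$ with $g(\tau_0,s_0)=0$ and $\partial g/\partial s(\tau_0,s_0)=0$. It is supercritical if there is a neighbourhood $U$ of $(\tau_0,s_0)$ such that for $\tau>\tau_0$ close to $\tau_0$ the set $\{s:(\tau,s)\in U,\ g(\tau,s)=0\}$ has exactly two elements, for $\tau=\tau_0$ exactly one, and for $\tau<\tau_0$ close to $\tau_0$ none; subcritical if the same holds with the roles of $\tau>\tau_0$ and $\tau<\tau_0$ interchanged. *)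

From Stdlib Require Import Reals Lra.
Open Scope R_scope.

Definition pdelta (d : R) : R := - d ^ 2 + d + 1.
Definition Phi : R := (1 + sqrt 5) / 2.

Definition Fdelta (d tau : R) : R := Rpower tau (pdelta d) - Rpower tau d.

Definition is_max_F (d M : R) : Prop :=
  (exists t, 0 < t <= 1 /\ Fdelta d t = M) /\
  (forall t, 0 < t <= 1 -> Fdelta d t <= M).

(* g(tau,s) = tau^{delta^2} + gamma tau^{delta^2-delta} (1 + k sin s) - tau,
   with s a real representative of a point of S^1 = R/2piZ *)
Definition gfun (d gam k tau s : R) : R :=
  Rpower tau (d ^ 2) + gam * Rpower tau (d ^ 2 - d) * (1 + k * sin s) - tau.

Definition is_empty (P : R -> Prop) : Prop := forall s, ~ P s.
Definition is_single (P : R -> Prop) (a : R) : Prop := forall s, P s <-> s = a.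
Definition has_one (P : R -> Prop) : Prop := exists a, is_single P a.
Definition has_two (P : R -> Prop) : Prop :=
  exists a b, a <> b /\ forall s, P s <-> (s = a \/ s = b).

(* The slice Z ∩ ({tau} × S^1), points of S^1 represented in [0, 2pi) *)
Definition slice (g : R -> R -> R) (tau : R) : R -> Prop :=
  fun s => 0 <= s < 2 * PI /\ g tau s = 0.

Definition fold_point (g : R -> R -> R) (tau0 s0 : R) : Prop :=
  0 < tau0 <= 1 /\ g tau0 s0 = 0 /\ derivable_pt_lim (fun s => g tau0 s) s0 0.

(* A neighbourhood of (tau0,s0) in the cylinder C, expressed in the chart
   [s0 - pi, s0 + pi) of S^1 (which is bijective onto S^1): a subset of
   C (in this chart) containing an open box around (tau0, s0). *)
Definition cyl_nbhd (tau0 s0 : R) (U : R -> R -> Prop) : Prop :=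
  (forall tau s, U tau s -> 0 < tau <= 1 /\ s0 - PI <= s < s0 + PI) /\
  (exists r, 0 < r /\ forall tau s, 0 < tau <= 1 -> Rabs (tau - tau0) < r ->
        Rabs (s - s0) < r -> U tau s).

Definition zeros_in (g : R -> R -> R) (U : R -> R -> Prop) (tau : R) : R -> Prop :=
  fun s => U tau s /\ g tau s = 0.

Definition supercritical (g : R -> R -> R) (tau0 s0 : R) : Prop :=
  fold_point g tau0 s0 /\
  exists U, cyl_nbhd tau0 s0 U /\ exists eta, 0 < eta /\
    (forall tau, tau0 < tau < tau0 + eta -> has_two (zeros_in g U tau)) /\
    has_one (zeros_in g U tau0) /\
    (forall tau, tau0 - eta < tau < tau0 -> is_empty (zeros_in g U tau)).

Definition subcritical (g : R -> R -> R) (tau0 s0 : R) : Prop :=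
  fold_point g tau0 s0 /\
  exists U, cyl_nbhd tau0 s0 U /\ exists eta, 0 < eta /\
    (forall tau, tau0 - eta < tau < tau0 -> has_two (zeros_in g U tau)) /\
    has_one (zeros_in g U tau0) /\
    (forall tau, tau0 < tau < tau0 + eta -> is_empty (zeros_in g U tau)).

Definition slices_converge_3pi2 (g : R -> R -> R) : Prop :=
  forall eps, 0 < eps -> exists eta, 0 < eta /\
    forall tau s, 0 < tau < eta -> slice g tau s -> Rabs (s - 3 * PI / 2) < eps.

(* For tau > 0 the function factors as
     g(tau,s) = tau^(delta^2-delta) * (gam (1 + sin s) - F(tau)),
   so the slice at tau is the level set sin s = F(tau)/gam - 1 on the circle:
   two points while 0 < F(tau) < 2 gam, the single point pi/2 where
   F(tau) = 2 gam, nothing where F(tau) > 2 gam, and the single point 3pi/2 at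
   tau = 1 where F vanishes.  Everything is thus read off the graph of
   F = tau^p - tau^delta.  If p = p(delta) > 0 (delta < Phi), F is positive on
   (0,1), tends to 0 at 0 and is unimodal with peak at (p/delta)^(1/(delta-p));
   if p < 0 (delta > Phi), F decreases from +oo to F(1) = 0.  The fold points
   are the crossings of the level 2 gam, and their type is the side on which
   F exceeds 2 gam.  Near such a crossing F > gam, so all zeros close to
   (tau, pi/2) lie in the upper half circle, which serves as the neighbourhood. *)
From Stdlib Require Import Reals Lra.
From Coquelicot Require Import Coquelicot.
Open Scope R_scope.

(** * Level sets of the sine on [0, 2 pi) *)

Definition sin_level (c s : R) : Prop := 0 <= s < 2 * PI /\ sin s = c.

Lemma asin_sin_cases s : 0 <= s < 2 * PI ->
  s = asin (sin s) \/ s = PI - asin (sin s) \/ s = asin (sin s) + 2 * PI.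
Proof.
  intros hs. pose proof PI_RGT_0.
  destruct (Rle_lt_dec s (PI / 2)); [left; rewrite asin_sin; lra|].
  destruct (Rle_lt_dec s (3 * (PI / 2))).
  - right; left. rewrite <- sin_PI_x, asin_sin; lra.
  - right; right.
    replace (sin s) with (sin (s - 2 * PI)) by
      (rewrite <- (sin_period (s - 2 * PI) 1); f_equal; simpl; ring).
    rewrite asin_sin; lra.
Qed.

Lemma sin_level_two c : -1 < c < 1 -> has_two (sin_level c).
Proof.
  intros hc. pose proof (asin_bound_lt c hc) as ha. pose proof PI_RGT_0.
  assert (hs : sin (asin c) = c) by (apply sin_asin; lra).
  assert (hcases : forall s, sin_level c s ->
    s = asin c \/ s = PI - asin c \/ s = asin c + 2 * PI).
  { intros s [hr <-]. exact (asin_sin_cases s hr). }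
  destruct (Rle_lt_dec 0 (asin c)).
  - exists (asin c), (PI - asin c). split; [lra|]. intros s; split.
    + intros hsl. destruct (proj1 hsl). destruct (hcases s hsl) as [e|[e|e]]; lra.
    + intros [-> | ->]; split; try lra. rewrite sin_PI_x; exact hs.
  - exists (PI - asin c), (asin c + 2 * PI). split; [lra|]. intros s; split.
    + intros hsl. destruct (proj1 hsl). destruct (hcases s hsl) as [e|[e|e]]; lra.
    + intros [-> | ->]; split; try lra.
      * rewrite sin_PI_x; exact hs.
      * replace (asin c + 2 * PI) with (asin c + 2 * INR 1 * PI) by (simpl; ring).
        rewrite sin_period; exact hs.
Qed.

Lemma sin_level_max : is_single (sin_level 1) (PI / 2).
Proof.
  pose proof PI_RGT_0. intros s; split.
  - intros [hr hsin]. assert (ha : asin 1 = PI / 2) by (rewrite <- sin_PI2, asin_sin; lra).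
    destruct (asin_sin_cases s hr) as [e|[e|e]]; rewrite hsin, ha in e; lra.
  - intros ->. split; [lra | apply sin_PI2].
Qed.

Lemma sin_level_min : is_single (sin_level (-1)) (3 * PI / 2).
Proof.
  pose proof PI_RGT_0.
  assert (hm : sin (- (PI / 2)) = -1) by (rewrite sin_neg, sin_PI2; ring).
  assert (ha : asin (-1) = - (PI / 2)) by (rewrite <- hm, asin_sin; lra).
  intros s; split.
  - intros [hr hsin]. destruct (asin_sin_cases s hr) as [e|[e|e]]; rewrite hsin, ha in e; lra.
  - intros ->. split; [lra|].
    replace (3 * PI / 2) with (PI - - (PI / 2)) by field. rewrite sin_PI_x; exact hm.
Qed.

Lemma sin_level_empty c : 1 < c -> is_empty (sin_level c).
Proof. intros hc s [_ h]. pose proof (SIN_bound s); lra. Qed.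

Lemma sin_level_pos_upper c s : 0 < c -> sin_level c s -> 0 < s < PI.
Proof.
  intros hc [[h0 h2] h]. pose proof PI_RGT_0.
  destruct (Req_dec s 0) as [->|]; [rewrite sin_0 in h; lra|].
  destruct (Rlt_le_dec s PI); [lra|].
  destruct (Req_dec s PI) as [->|]; [rewrite sin_PI in h; lra|].
  pose proof (sin_lt_0 s ltac:(lra) h2); lra.
Qed.

Lemma sin_lt_near_3PI2 e s : 0 < e <= PI / 2 -> 0 <= s < 2 * PI ->
  sin s < sin (e - PI / 2) -> Rabs (s - 3 * PI / 2) < e.
Proof.
  intros he hs hsin. pose proof PI_RGT_0.
  pose proof (asin_bound (sin s)). pose proof (sin_asin (sin s) (SIN_bound s)).
  assert (ha : asin (sin s) < e - PI / 2).
  { destruct (Rlt_le_dec (asin (sin s)) (e - PI / 2)) as [|[hlt|heq]]; [assumption| |].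
    - pose proof (sin_increasing_1 (e - PI / 2) (asin (sin s)) ltac:(lra) ltac:(lra) ltac:(lra) ltac:(lra) hlt); lra.
    - rewrite heq in hsin; lra. }
  apply Rabs_def1; destruct (asin_sin_cases s hs) as [E|[E|E]]; lra.
Qed.

Lemma has_two_ext (P Q : R -> Prop) : (forall s, P s <-> Q s) -> has_two Q -> has_two P.
Proof. intros h [a [b [hab hq]]]. exists a, b; split; [exact hab|]. intros s; rewrite h; apply hq. Qed.

Lemma is_single_ext (P Q : R -> Prop) a : (forall s, P s <-> Q s) -> is_single Q a -> is_single P a.
Proof. intros h hq s. rewrite h; apply hq. Qed.

Lemma is_empty_sub (P Q : R -> Prop) : (forall s, P s -> Q s) -> is_empty Q -> is_empty P.
Proof. intros h hq s hp. exact (hq s (h s hp)). Qed.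

(** * Real powers and the profile F *)

Lemma Rpower_gt_0 x y : 0 < Rpower x y.
Proof. apply exp_pos. Qed.

Lemma Rpower_1_l y : Rpower 1 y = 1.
Proof. unfold Rpower. rewrite ln_1, Rmult_0_r. apply exp_0. Qed.

Lemma Rpower_lt_lt_1 x y z : 0 < x < 1 -> y < z -> Rpower x z < Rpower x y.
Proof.
  intros hx hyz. apply exp_increasing.
  assert (ln x < 0) by (rewrite <- ln_1; apply ln_increasing; lra). nra.
Qed.

Lemma Rlt_Rpower_l_neg a b c : c < 0 -> 0 < a < b -> Rpower b c < Rpower a c.
Proof.
  intros hc hab. apply exp_increasing.
  pose proof (ln_increasing a b ltac:(lra) ltac:(lra)). nra.
Qed.

Lemma pdelta_factor d : pdelta d = - ((d - Phi) * (d - (1 - sqrt 5) / 2)).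
Proof. unfold pdelta, Phi. pose proof (sqrt_sqrt 5 ltac:(lra)). lra. Qed.

Lemma sqrt5_gt_0 : 0 < sqrt 5.
Proof. apply sqrt_lt_R0; lra. Qed.

Lemma Fdelta_1 d : Fdelta d 1 = 0.
Proof. unfold Fdelta. rewrite !Rpower_1_l; ring. Qed.

Definition Fdelta_peak (d : R) : R := Rpower (pdelta d / d) (/ (d - pdelta d)).

Section Profile.

Variable d : R.
Hypothesis hd : 1 < d.

Local Notation p := (pdelta d).
Local Notation F := (Fdelta d).
Local Notation tc := (Fdelta_peak d).

Lemma pdelta_pos : d < Phi -> 0 < p.
Proof. intros h. rewrite pdelta_factor. pose proof sqrt5_gt_0. nra. Qed.

Lemma pdelta_neg : Phi < d -> p < 0.
Proof. intros h. rewrite pdelta_factor. pose proof sqrt5_gt_0. nra. Qed.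

Lemma pdelta_lt : p < d.
Proof. unfold pdelta. nra. Qed.

Lemma Fdelta_pos t : 0 < p -> 0 < t < 1 -> 0 < F t.
Proof. intros hp ht. pose proof (Rpower_lt_lt_1 t p d ht pdelta_lt). unfold Fdelta; lra. Qed.

Lemma Fdelta_vanishes_at_0 : 0 < p ->
  forall eps, 0 < eps -> exists eta, 0 < eta /\ forall t, 0 < t < eta -> F t < eps.
Proof.
  intros hp eps heps. exists (Rpower eps (/ p)). split; [apply Rpower_gt_0|].
  intros t ht. pose proof (Rpower_gt_0 t d).
  assert (htp : Rpower t p < Rpower (Rpower eps (/ p)) p) by (apply Rlt_Rpower_l; lra).
  rewrite Rpower_mult, Rinv_l, Rpower_1 in htp by lra.
  unfold Fdelta; lra.
Qed.

Lemma Fdelta_decreasing x y : p < 0 -> 0 < x -> x < y -> F y < F x.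
Proof.
  intros hp hx hxy.
  pose proof (Rlt_Rpower_l_neg x y p hp ltac:(lra)).
  pose proof (Rlt_Rpower_l x y d ltac:(lra) ltac:(lra)).
  unfold Fdelta; lra.
Qed.

Lemma Fdelta_unbounded_at_0 : p < 0 -> forall K, exists t, 0 < t < 1 /\ K < F t.
Proof.
  intros hp K. pose proof (Rle_abs K). pose proof (Rabs_pos K).
  set (t := Rpower (Rabs K + 2) (/ p)).
  assert (ht1 : t < 1).
  { rewrite <- (Rpower_O (Rabs K + 2)) by lra.
    apply Rpower_lt; [lra | apply Rinv_lt_0_compat, hp]. }
  assert (htp : Rpower t p = Rabs K + 2).
  { unfold t. rewrite Rpower_mult, Rinv_l, Rpower_1 by lra. reflexivity. }
  assert (htd : Rpower t d < 1).
  { rewrite <- (Rpower_1_l d). apply Rlt_Rpower_l; [lra | split; [apply Rpower_gt_0 | exact ht1]]. }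
  exists t. split; [split; [apply Rpower_gt_0 | exact ht1]|].
  unfold Fdelta; lra.
Qed.

Lemma Fdelta_derivative t : 0 < t ->
  derivable_pt_lim F t (Rpower t (p - 1) * (p - d * Rpower t (d - p))).
Proof.
  intros ht.
  replace (Rpower t (p - 1) * (p - d * Rpower t (d - p)))
    with (p * Rpower t (p - 1) - d * Rpower t (d - 1)).
  - apply derivable_pt_lim_minus; apply derivable_pt_lim_power; exact ht.
  - replace (d - 1) with ((p - 1) + (d - p)) by ring. rewrite Rpower_plus; ring.
Qed.

Lemma Fdelta_continuous t : 0 < t -> continuity_pt F t.
Proof. intros ht. apply derivable_continuous_pt. eexists. apply Fdelta_derivative, ht. Qed.

Lemma Fdelta_mvt x y : 0 < x -> x < y -> exists c, x < c < y /\
  F y - F x = Rpower c (p - 1) * (p - d * Rpower c (d - p)) * (y - x).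
Proof.
  intros hx hxy.
  destruct (MVT_cor2 F (fun c => Rpower c (p - 1) * (p - d * Rpower c (d - p))) x y hxy)
    as [c [hc hcxy]].
  - intros c hc. apply Fdelta_derivative. lra.
  - exists c. split; assumption.
Qed.

Lemma Fdelta_peak_bounds : 0 < p -> 0 < tc < 1.
Proof.
  intros hp. pose proof pdelta_lt. split; [apply Rpower_gt_0|].
  assert (hpd : 0 < p / d < 1) by (split; [apply Rdiv_lt_0_compat | apply Rlt_div_l]; lra).
  rewrite <- (Rpower_O (p / d)) by lra.
  apply Rpower_lt_lt_1; [exact hpd | apply Rinv_0_lt_compat; lra].
Qed.

(* The peak is where the derivative factor [p - d t^(d-p)] changes sign. *)
Lemma Fdelta_peak_pow : 0 < p -> d * Rpower tc (d - p) = p.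
Proof.
  intros hp. pose proof pdelta_lt. unfold Fdelta_peak.
  rewrite Rpower_mult, Rinv_l, Rpower_1 by (try apply Rdiv_lt_0_compat; lra).
  field; lra.
Qed.

Lemma Fdelta_increasing_to_peak x y : 0 < p -> 0 < x -> x < y -> y <= tc -> F x < F y.
Proof.
  intros hp hx hxy hy. pose proof pdelta_lt.
  destruct (Fdelta_mvt x y hx hxy) as [c [hc E]].
  pose proof (Rlt_Rpower_l c tc (d - p) ltac:(lra) ltac:(lra)).
  pose proof (Fdelta_peak_pow hp).
  assert (0 < p - d * Rpower c (d - p)) by nra.
  pose proof (Rpower_gt_0 c (p - 1)).
  assert (0 < Rpower c (p - 1) * (p - d * Rpower c (d - p)) * (y - x))
    by (repeat apply Rmult_lt_0_compat; lra).
  lra.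
Qed.

Lemma Fdelta_decreasing_after_peak x y : 0 < p -> tc <= x -> x < y -> F y < F x.
Proof.
  intros hp hx hxy. pose proof pdelta_lt. pose proof Fdelta_peak_bounds hp.
  destruct (Fdelta_mvt x y ltac:(lra) hxy) as [c [hc E]].
  pose proof (Rlt_Rpower_l tc c (d - p) ltac:(lra) ltac:(lra)).
  pose proof (Fdelta_peak_pow hp).
  assert (p - d * Rpower c (d - p) < 0) by nra.
  pose proof (Rpower_gt_0 c (p - 1)).
  assert (Rpower c (p - 1) * (d * Rpower c (d - p) - p) * (y - x) > 0)
    by (repeat apply Rmult_lt_0_compat; lra).
  lra.
Qed.

Lemma Fdelta_le_peak t : 0 < p -> 0 < t -> F t <= F tc.
Proof.
  intros hp ht.
  destruct (Rle_lt_dec t tc) as [[hlt | ->] | hgt]; [| lra |].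
  - left. apply Fdelta_increasing_to_peak; lra.
  - left. apply Fdelta_decreasing_after_peak; lra.
Qed.

Lemma IVT_strict f x y L : x < y -> (forall t, x <= t <= y -> continuity_pt f t) ->
  f x < L < f y -> exists z, x < z < y /\ f z = L.
Proof.
  intros hxy hc hL.
  destruct (Ranalysis5.IVT_interv (fun t => f t - L) x y) as [z [hz hfz]]; try lra.
  - intros t ht. apply continuity_pt_minus; [apply hc, ht | apply continuity_pt_const; easy].
  - exists z. assert (z <> x) by (intros ->; lra). assert (z <> y) by (intros ->; lra).
    split; lra.
Qed.

Lemma IVT_strict_down f x y L : x < y -> (forall t, x <= t <= y -> continuity_pt f t) ->
  f y < L < f x -> exists z, x < z < y /\ f z = L.
Proof.
  intros hxy hc hL.
  destruct (IVT_strict (fun t => - f t) x y (- L)) as [z [hz hfz]]; try lra.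
  - intros t ht. apply continuity_pt_opp, hc, ht.
  - exists z. split; [exact hz | lra].
Qed.

Lemma Fdelta_crosses_twice L : 0 < p -> 0 < L < F tc ->
  exists a b, 0 < a < b /\ b < 1 /\ F a = L /\ F b = L /\
    (forall t, 0 < t < a -> F t < L) /\ (forall t, a < t < b -> L < F t) /\
    (forall t, b < t -> F t < L).
Proof.
  intros hp hL. pose proof (Fdelta_peak_bounds hp).
  destruct (Fdelta_vanishes_at_0 hp L) as [eta [heta hsmall]]; [lra|].
  pose proof (Rmin_l eta tc). pose proof (Rmin_r eta tc).
  pose proof (Rmin_pos eta tc heta ltac:(lra)).
  set (t1 := Rmin eta tc / 2) in *.
  destruct (IVT_strict F t1 tc L) as [a [ha hFa]].
  - unfold t1; lra.
  - intros t ht. apply Fdelta_continuous. unfold t1 in ht; lra.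
  - split; [apply hsmall; unfold t1|]; lra.
  - destruct (IVT_strict_down F tc 1 L) as [b [hb hFb]].
    + lra.
    + intros t ht. apply Fdelta_continuous. lra.
    + rewrite Fdelta_1; lra.
    + assert (0 < a) by (unfold t1 in ha; lra).
      exists a, b. do 4 (split; [lra|]). split; [|split].
      * intros t ht. rewrite <- hFa. apply Fdelta_increasing_to_peak; lra.
      * intros t ht. destruct (Rle_lt_dec t tc).
        -- rewrite <- hFa. apply Fdelta_increasing_to_peak; lra.
        -- rewrite <- hFb. apply Fdelta_decreasing_after_peak; lra.
      * intros t ht. rewrite <- hFb. apply Fdelta_decreasing_after_peak; lra.
Qed.

Lemma Fdelta_crosses_once L : p < 0 -> 0 < L ->
  exists t0, 0 < t0 < 1 /\ F t0 = L /\
    (forall t, 0 < t < t0 -> L < F t) /\ (forall t, t0 < t -> F t < L).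
Proof.
  intros hp hL. destruct (Fdelta_unbounded_at_0 hp L) as [t1 [ht1 hFt1]].
  destruct (IVT_strict_down F t1 1 L) as [t0 [ht0 hF0]].
  - lra.
  - intros t ht. apply Fdelta_continuous. lra.
  - rewrite Fdelta_1; lra.
  - exists t0. split; [lra|]. split; [exact hF0|]. split.
    + intros t ht. rewrite <- hF0. apply Fdelta_decreasing; lra.
    + intros t ht. rewrite <- hF0. apply Fdelta_decreasing; lra.
Qed.

End Profile.

(** * Slices of the zero set *)

Section Slices.

Variables d gam : R.
Hypothesis hgam : 0 < gam.

Local Notation g := (gfun d gam 1).
Local Notation F := (Fdelta d).

Lemma gfun_factor tau s : 0 < tau ->
  g tau s = Rpower tau (d ^ 2 - d) * (gam * (1 + sin s) - F tau).
Proof.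
  intros ht. unfold gfun, Fdelta.
  assert (Rpower tau (d ^ 2) = Rpower tau (d ^ 2 - d) * Rpower tau d)
    by (rewrite <- Rpower_plus; f_equal; ring).
  assert (Rpower tau (d ^ 2 - d) * Rpower tau (pdelta d) = tau).
  { rewrite <- Rpower_plus. unfold pdelta.
    replace (d ^ 2 - d + (- d ^ 2 + d + 1)) with 1 by ring. apply Rpower_1, ht. }
  lra.
Qed.

Lemma slice_sin_level tau : 0 < tau ->
  forall s, slice g tau s <-> sin_level (F tau / gam - 1) s.
Proof.
  intros ht s. unfold slice, sin_level. rewrite gfun_factor by exact ht.
  pose proof (Rpower_gt_0 tau (d ^ 2 - d)).
  split; intros [hs he]; split; try exact hs.
  - apply Rmult_integral in he as [he | he]; [lra|].
    replace (F tau) with (gam * (1 + sin s)) by lra. field; lra.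
  - rewrite he. replace (gam * (1 + (F tau / gam - 1)) - F tau) with 0 by (field; lra). ring.
Qed.

Lemma slice_two tau : 0 < tau -> 0 < F tau < 2 * gam -> has_two (slice g tau).
Proof.
  intros ht hF. apply (has_two_ext _ _ (slice_sin_level tau ht)), sin_level_two.
  assert (F tau = gam * (F tau / gam)) by (field; lra). split; nra.
Qed.

Lemma slice_top tau : 0 < tau -> F tau = 2 * gam -> is_single (slice g tau) (PI / 2).
Proof.
  intros ht hF. apply (is_single_ext _ _ _ (slice_sin_level tau ht)).
  replace (F tau / gam - 1) with 1 by (rewrite hF; field; lra). exact sin_level_max.
Qed.

Lemma slice_empty tau : 0 < tau -> 2 * gam < F tau -> is_empty (slice g tau).
Proof.
  intros ht hF. apply (is_empty_sub _ _ (fun s => proj1 (slice_sin_level tau ht s))).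
  apply sin_level_empty. assert (F tau = gam * (F tau / gam)) by (field; lra). nra.
Qed.

Lemma slice_at_1 : is_single (slice g 1) (3 * PI / 2).
Proof.
  apply (is_single_ext _ _ _ (slice_sin_level 1 Rlt_0_1)).
  rewrite Fdelta_1. replace (0 / gam - 1) with (-1) by (field; lra). exact sin_level_min.
Qed.

Lemma slices_converge_of_vanishing :
  (forall eps, 0 < eps -> exists eta, 0 < eta /\ forall t, 0 < t < eta -> F t < eps) ->
  slices_converge_3pi2 g.
Proof.
  intros hF eps heps. pose proof PI_RGT_0.
  pose proof (Rmin_l eps (PI / 2)). pose proof (Rmin_r eps (PI / 2)).
  pose proof (Rmin_pos eps (PI / 2) heps ltac:(lra)).
  set (e := Rmin eps (PI / 2)) in *.
  assert (hlow : -1 < sin (e - PI / 2)).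
  { replace (-1) with (sin (- (PI / 2))) by (rewrite sin_neg, sin_PI2; ring).
    apply sin_increasing_1; lra. }
  destruct (hF (gam * (1 + sin (e - PI / 2)))) as [eta [heta hsmall]]; [nra|].
  exists (Rmin eta 1). split; [apply Rmin_pos; lra|].
  intros tau s ht hs. pose proof (Rmin_l eta 1). pose proof (Rmin_r eta 1).
  apply (slice_sin_level tau ltac:(lra)) in hs as [hr hsin].
  apply Rlt_le_trans with e; [|assumption].
  apply sin_lt_near_3PI2; [lra | exact hr|].
  specialize (hsmall tau ltac:(lra)).
  assert (F tau = gam * (F tau / gam)) by (field; lra). nra.
Qed.

End Slices.

(** * Fold points *)

(* The upper half circle, seen in the chart [s0 - pi, s0 + pi) with s0 = pi/2. *)
Definition upper_half (tau s : R) : Prop := 0 < tau <= 1 /\ Rabs (s - PI / 2) < PI / 2.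

Lemma cyl_nbhd_upper_half tau0 : cyl_nbhd tau0 (PI / 2) upper_half.
Proof.
  pose proof PI_RGT_0. split.
  - intros tau s [ht hs]. apply Rabs_def2 in hs. split; [exact ht | lra].
  - exists (PI / 2). split; [lra|]. intros tau s ht _ hs. split; assumption.
Qed.

Lemma continuity_pt_gt_near f x L : continuity_pt f x -> L < f x ->
  exists del, 0 < del /\ forall y, Rabs (y - x) < del -> L < f y.
Proof.
  intros hc hL. destruct (hc (f x - L)) as [del [hdel hnear]]; [lra|].
  exists del. split; [exact hdel|]. intros y hy.
  destruct (Req_dec x y) as [<- | hxy]; [exact hL|].
  assert (hfy : Rabs (f y - f x) < f x - L) by (apply hnear; split; [split; [exact I | exact hxy] | exact hy]).
  apply Rabs_def2 in hfy; lra.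
Qed.

Section Folds.

Variables d gam : R.
Hypothesis hgam : 0 < gam.

Local Notation g := (gfun d gam 1).
Local Notation F := (Fdelta d).

Lemma fold_point_of_cos tau s : 0 < tau <= 1 -> g tau s = 0 -> cos s = 0 -> fold_point g tau s.
Proof.
  intros ht hg hc. split; [exact ht|]. split; [exact hg|].
  apply is_derive_Reals. unfold gfun. auto_derive; [exact I|].
  rewrite hc. ring.
Qed.

Lemma fold_point_at_top tau : 0 < tau <= 1 -> F tau = 2 * gam -> fold_point g tau (PI / 2).
Proof.
  intros ht hF. apply fold_point_of_cos; [exact ht | | exact cos_PI2].
  apply (slice_top d gam hgam tau ltac:(lra) hF). reflexivity.
Qed.

Lemma zeros_upper_half_slice tau s : zeros_in g upper_half tau s -> slice g tau s.
Proof.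
  intros [[_ hs] hz]. apply Rabs_def2 in hs. pose proof PI_RGT_0. split; [lra | exact hz].
Qed.

Lemma zeros_upper_half_iff tau : 0 < tau <= 1 -> gam < F tau ->
  forall s, zeros_in g upper_half tau s <-> slice g tau s.
Proof.
  intros ht hF s. split; [apply zeros_upper_half_slice|].
  intros hsl. split; [split; [exact ht|] | exact (proj2 hsl)].
  apply (slice_sin_level d gam hgam tau ltac:(lra)), sin_level_pos_upper in hsl.
  - apply Rabs_def1; lra.
  - assert (F tau = gam * (F tau / gam)) by (field; lra). nra.
Qed.

Lemma upper_zeros_one tau : 0 < tau <= 1 -> F tau = 2 * gam ->
  has_one (zeros_in g upper_half tau).
Proof.
  intros ht hF. exists (PI / 2).
  apply (is_single_ext _ _ _ (zeros_upper_half_iff tau ht ltac:(lra))).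
  apply slice_top; lra.
Qed.

Lemma upper_zeros_near_crossing tau0 : 0 < tau0 < 1 -> F tau0 = 2 * gam ->
  exists eta, 0 < eta /\ forall tau, Rabs (tau - tau0) < eta ->
    (F tau < 2 * gam -> has_two (zeros_in g upper_half tau)) /\
    (2 * gam < F tau -> is_empty (zeros_in g upper_half tau)).
Proof.
  intros ht hF.
  destruct (continuity_pt_gt_near F tau0 gam (Fdelta_continuous d tau0 ltac:(lra)))
    as [del [hdel hnear]]; [lra|].
  pose proof (Rmin_l del (Rmin tau0 (1 - tau0))). pose proof (Rmin_r del (Rmin tau0 (1 - tau0))).
  pose proof (Rmin_l tau0 (1 - tau0)). pose proof (Rmin_r tau0 (1 - tau0)).
  exists (Rmin del (Rmin tau0 (1 - tau0))). split; [repeat apply Rmin_pos; lra|].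
  intros tau htau. pose proof (Rabs_def2 _ _ htau).
  assert (hF' : gam < F tau) by (apply hnear; lra).
  split; intros hlev.
  - apply (has_two_ext _ _ (zeros_upper_half_iff tau ltac:(lra) hF')), slice_two; lra.
  - apply (is_empty_sub _ _ (zeros_upper_half_slice tau)), slice_empty; lra.
Qed.

Lemma supercritical_of_crossing tau0 eta0 : 0 < tau0 < 1 -> 0 < eta0 -> F tau0 = 2 * gam ->
  (forall tau, tau0 - eta0 < tau < tau0 -> 2 * gam < F tau) ->
  (forall tau, tau0 < tau < tau0 + eta0 -> F tau < 2 * gam) ->
  supercritical g tau0 (PI / 2).
Proof.
  intros ht he hF hleft hright.
  destruct (upper_zeros_near_crossing tau0 ht hF) as [eta [heta hcount]].
  split; [apply fold_point_at_top; [lra | exact hF]|].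
  exists upper_half. split; [apply cyl_nbhd_upper_half|].
  exists (Rmin eta eta0). split; [apply Rmin_pos; assumption|].
  pose proof (Rmin_l eta eta0). pose proof (Rmin_r eta eta0).
  split; [|split].
  - intros tau htau. apply (proj1 (hcount tau ltac:(apply Rabs_def1; lra))), hright; lra.
  - apply upper_zeros_one; [lra | exact hF].
  - intros tau htau. apply (proj2 (hcount tau ltac:(apply Rabs_def1; lra))), hleft; lra.
Qed.

Lemma subcritical_of_crossing tau0 eta0 : 0 < tau0 < 1 -> 0 < eta0 -> F tau0 = 2 * gam ->
  (forall tau, tau0 - eta0 < tau < tau0 -> F tau < 2 * gam) ->
  (forall tau, tau0 < tau < tau0 + eta0 -> 2 * gam < F tau) ->
  subcritical g tau0 (PI / 2).
Proof.
  intros ht he hF hleft hright.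
  destruct (upper_zeros_near_crossing tau0 ht hF) as [eta [heta hcount]].
  split; [apply fold_point_at_top; [lra | exact hF]|].
  exists upper_half. split; [apply cyl_nbhd_upper_half|].
  exists (Rmin eta eta0). split; [apply Rmin_pos; assumption|].
  pose proof (Rmin_l eta eta0). pose proof (Rmin_r eta eta0).
  split; [|split].
  - intros tau htau. apply (proj1 (hcount tau ltac:(apply Rabs_def1; lra))), hleft; lra.
  - apply upper_zeros_one; [lra | exact hF].
  - intros tau htau. apply (proj2 (hcount tau ltac:(apply Rabs_def1; lra))), hright; lra.
Qed.

End Folds.

(** * The three regimes *)

Section Regimes.

Variables d gam : R.
Hypothesis hd : 1 < d.
Hypothesis hgam : 0 < gam.

Local Notation g := (gfun d gam 1).
Local Notation F := (Fdelta d).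

Lemma slices_large_gamma : d < Phi -> forall M, is_max_F d M -> M / 2 < gam ->
  (forall tau, 0 < tau < 1 -> has_two (slice g tau)) /\
  is_single (slice g 1) (3 * PI / 2) /\
  slices_converge_3pi2 g.
Proof.
  intros hPhi M [_ hM] hgM. pose proof (pdelta_pos d hd hPhi) as hp.
  split; [|split].
  - intros tau ht. apply slice_two; [exact hgam | lra|].
    pose proof (hM tau ltac:(lra)). split; [apply Fdelta_pos|]; lra.
  - exact (slice_at_1 d gam hgam).
  - apply slices_converge_of_vanishing, Fdelta_vanishes_at_0; assumption.
Qed.

Lemma slices_small_gamma : d < Phi -> forall M, is_max_F d M -> gam < M / 2 ->
  exists a b, 0 < a /\ a < b /\ b < 1 /\
  (forall tau, (0 < tau < a \/ b < tau < 1) -> has_two (slice g tau)) /\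
  is_single (slice g a) (PI / 2) /\
  is_single (slice g b) (PI / 2) /\
  (forall tau, a < tau < b -> is_empty (slice g tau)) /\
  is_single (slice g 1) (3 * PI / 2) /\
  subcritical g a (PI / 2) /\
  supercritical g b (PI / 2) /\
  slices_converge_3pi2 g.
Proof.
  intros hPhi M [[ts [hts <-]] _] hgM. pose proof (pdelta_pos d hd hPhi) as hp.
  pose proof (Fdelta_le_peak d hd ts hp ltac:(lra)).
  destruct (Fdelta_crosses_twice d hd (2 * gam) hp ltac:(lra))
    as [a [b [hab [hb1 [hFa [hFb [hbelow [hmid habove]]]]]]]].
  pose proof (Rmin_l a (b - a)). pose proof (Rmin_r a (b - a)).
  exists a, b. do 3 (split; [lra|]).
  split; [|split; [|split; [|split; [|split; [|split; [|split]]]]]].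
  - intros tau hdom. apply slice_two; [exact hgam | lra|].
    split; [apply Fdelta_pos; lra|]. destruct hdom; [apply hbelow | apply habove]; lra.
  - apply slice_top; lra.
  - apply slice_top; lra.
  - intros tau ht. apply slice_empty; [exact hgam | lra | apply hmid, ht].
  - exact (slice_at_1 d gam hgam).
  - apply (subcritical_of_crossing d gam hgam a (Rmin a (b - a)));
      [lra | apply Rmin_pos; lra | exact hFa | intros; apply hbelow | intros; apply hmid]; lra.
  - apply (supercritical_of_crossing d gam hgam b (b - a));
      [lra | lra | exact hFb | intros; apply hmid | intros; apply habove]; lra.
  - apply slices_converge_of_vanishing, Fdelta_vanishes_at_0; assumption.
Qed.

Lemma slices_large_delta : Phi < d ->
  exists tau0, 0 < tau0 < 1 /\
  (forall tau, 0 < tau < tau0 -> is_empty (slice g tau)) /\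
  is_single (slice g tau0) (PI / 2) /\
  (forall tau, tau0 < tau < 1 -> has_two (slice g tau)) /\
  is_single (slice g 1) (3 * PI / 2) /\
  supercritical g tau0 (PI / 2) /\
  fold_point g 1 (3 * PI / 2).
Proof.
  intros hPhi. pose proof (pdelta_neg d hd hPhi) as hp.
  destruct (Fdelta_crosses_once d hd (2 * gam) hp ltac:(lra))
    as [t0 [ht0 [hF0 [habove hbelow]]]].
  exists t0. split; [exact ht0|].
  split; [|split; [|split; [|split; [|split]]]].
  - intros tau ht. apply slice_empty; [exact hgam | lra | apply habove, ht].
  - apply slice_top; lra.
  - intros tau ht. apply slice_two; [exact hgam | lra|]. split; [|apply hbelow; lra].
    rewrite <- (Fdelta_1 d). apply Fdelta_decreasing; lra.
  - exact (slice_at_1 d gam hgam).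
  - apply (supercritical_of_crossing d gam hgam t0 t0);
      [lra | lra | exact hF0 | intros; apply habove | intros; apply hbelow]; lra.
  - apply fold_point_of_cos; [lra | apply (slice_at_1 d gam hgam); reflexivity|].
    replace (3 * PI / 2) with (3 * (PI / 2)) by field. exact cos_3PI2.
Qed.

End Regimes.

Theorem mainTheorem4 (d gam : R) (hgam : 0 < gam) (hd : 1 < d) :
  let g := gfun d gam 1 in
  (* (a) *)
  (d < Phi -> forall M, is_max_F d M -> M / 2 < gam ->
     (forall tau, 0 < tau < 1 -> has_two (slice g tau)) /\
     is_single (slice g 1) (3 * PI / 2) /\
     slices_converge_3pi2 g) /\
  (* (b) *)
  (d < Phi -> forall M, is_max_F d M -> gam < M / 2 ->
     exists a b, 0 < a /\ a < b /\ b < 1 /\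
     (forall tau, (0 < tau < a \/ b < tau < 1) -> has_two (slice g tau)) /\
     is_single (slice g a) (PI / 2) /\
     is_single (slice g b) (PI / 2) /\
     (forall tau, a < tau < b -> is_empty (slice g tau)) /\
     is_single (slice g 1) (3 * PI / 2) /\
     subcritical g a (PI / 2) /\
     supercritical g b (PI / 2) /\
     slices_converge_3pi2 g) /\
  (* (c) *)
  (Phi < d ->
     exists tau0, 0 < tau0 < 1 /\
     (forall tau, 0 < tau < tau0 -> is_empty (slice g tau)) /\
     is_single (slice g tau0) (PI / 2) /\
     (forall tau, tau0 < tau < 1 -> has_two (slice g tau)) /\
     is_single (slice g 1) (3 * PI / 2) /\
     supercritical g tau0 (PI / 2) /\
     fold_point g 1 (3 * PI / 2)).
Proof.
  intros g. split; [|split].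
  - exact (slices_large_gamma d gam hd hgam).
  - exact (slices_small_gamma d gam hd hgam).
  - exact (slices_large_delta d gam hd hgam).
Qed.
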